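(* Let $G$ be a simple graph, let $S_1$ be a $k$-simplicial set of $G$, let $S_1,\ldots,S_r$ be the parts of the complete multipartite graph $G_{N_G[S_1]}$, and let $G'_i=G\setminus N_G[S_i]$ for $i=1,\ldots,r$. Then $G$ is $k$-shellable if and only if $G'_i$ is $k$-shellable for all $i=1,\ldots,r$.
   Context: $N_G(x)$ is the set of neighbours of $x$, $N_G[x]=N_G(x)\cup\{x\}$, $N_G[U]=\bigcup_{x\in U}N_G[x]$; $G\setminus U$ deletes the vertices of $U$ and incident edges; $G_U$ is the induced subgraph on $U$. A set $S$ of pairwise non-adjacent vertices of $G$ is a $k$-simplicial set if $G_{N_G[S]}$ is a complete $r$-partite graph with $k$-element parts $S_1,\ldots,S_r$ such that for every part $S_l$ and every two vertices $x_i,x_j\in S_l$, $N_G(x_i)=N_G(x_j)$. A graph $H$ is $k$-shellable if its independence complex $\Delta_H$ (faces: sets of pairwise non-adjacent vertices) is. $\langle F_1,\ldots,F_s\rangle$ denotes the complex with facets $F_1,\dots,F_s$. A complex $\Gamma$ of dimension $d$ is $k$-shellable ($1\le k\le d+1$) if its facets can be ordered $F_1,\ldots,F_r$ such that for every $j=2,\ldots,r$, $\Gamma_j=\langle F_j\rangle\cap\langle F_1,\ldots,F_{j-1}\rangle$ satisfies (i) $\Gamma_j$ is generated by a nonempty set of faces of $\langle F_j\rangle$ of dimension $|F_j|-k-1$; (ii) if $\Gamma_j$ has more than one facet, then for every two distinct facets $\sigma,\tau$ of $\Gamma_j$, $F_j\subseteq\sigma\cup\tau$. *)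

(* A simple graph is a symmetric irreflexive relation e on a
   finType T; subgraphs are induced subgraphs on vertex sets V : {set T}. *)
From mathcomp Require Import all_boot.
Set Implicit Arguments. Unset Strict Implicit. Unset Printing Implicit Defensive.

Section Defs.
Variable T : finType.

Definition openN (e : rel T) (x : T) : {set T} := [set y | e x y].

Definition closedN (e : rel T) (U : {set T}) : {set T} :=
  [set y | [exists x in U, (x == y) || e x y]].

Definition indep (e : rel T) (F : {set T}) : bool :=
  [forall x in F, forall y in F, ~~ e x y].

Definition indcomplex (e : rel T) (V : {set T}) : {set {set T}} :=
  [set F : {set T} | (F \subset V) && indep e F].

Definition facets (D : {set {set T}}) : {set {set T}} :=
  [set F in D | [forall G in D, (F \subset G) ==> (G == F)]].

Definition gen_seq (s : seq {set T}) : {set {set T}} :=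
  [set A : {set T} | has (fun F : {set T} => A \subset F) s].

Definition gen_set (L : {set {set T}}) : {set {set T}} :=
  [set A : {set T} | [exists F in L, A \subset F]].

Definition kshellable (k : nat) (D : {set {set T}}) : Prop :=
  (1 <= k)%N /\
  exists s : seq {set T},
    [/\ uniq s, [set F in s] = facets D &
     forall j : nat, (1 <= j < size s)%N ->
       let Fj := nth set0 s j in
       let Gam := gen_seq [:: Fj] :&: gen_seq (take j s) in
       (* (i) generated by a nonempty set of faces of <Fj> of dimension |Fj|-k-1 *)
       (exists L : {set {set T}},
          [/\ L != set0,
              (forall A, A \in L -> (A \subset Fj) /\ (#|A| + k = #|Fj|)%N) &
              Gam = gen_set L]) /\
       ((1 < #|facets Gam|)%N ->
          forall sg tau, sg \in facets Gam -> tau \in facets Gam -> sg != tau ->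
            Fj \subset sg :|: tau)].

Definition kshellable_graph (k : nat) (e : rel T) (V : {set T}) : Prop :=
  kshellable k (indcomplex e V).

(* S is a k-simplicial set of G = (T, e), and P = {S_1, ..., S_r} is the set
   of parts of the complete multipartite graph G_{N_G[S]} witnessing it. *)
Definition ksimplicial_parts (e : rel T) (k : nat) (S : {set T})
    (P : {set {set T}}) : Prop :=
  [/\ indep e S,
      partition P (closedN e S),
      (forall B, B \in P -> #|B| = k),
      (forall x y, x \in closedN e S -> y \in closedN e S ->
         e x y = (pblock P x != pblock P y)) &
      (forall B x y, B \in P -> x \in B -> y \in B -> openN e x = openN e y)].

Definition ksimplicial (e : rel T) (k : nat) (S : {set T}) : Prop :=
  exists P, ksimplicial_parts e k S P.

End Defs.

(* Every facet of the independence complex D of G contains exactly one part B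
   of P: the vertices of a part have the same neighbourhood, distinct parts are
   completely joined, and a facet missing N[S_1] could be enlarged by S_1.
   The link of B in D is the independence complex of G \ N[B], so F |-> F \ B
   identifies the facets of D containing B with those of G \ N[B].
   Keeping the facets of a k-shelling of D that contain B and deleting B gives
   a k-shelling of the link.  Conversely, concatenate the blocks B u (shelling
   of G \ N[B]), starting with B = S_1: a facet B u H meets the earlier blocks
   exactly in H, of codimension |B| = k, since H u S_1 is independent, and
   meets its own block in the join of B with the overlap of H in the shelling
   of G \ N[B]. *)

From mathcomp Require Import all_boot zify.
From Stdlib Require Import Lia.
Set Implicit Arguments. Unset Strict Implicit. Unset Printing Implicit Defensive.

Section Complexes.
Variable T : finType.
Implicit Types (A B C F G H : {set T}) (s p q : seq {set T}) (L D : {set {set T}}).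

Lemma setUDK A B : A \subset B -> A :|: (B :\: A) = B.
Proof.
move=> AB; apply/setP=> x; rewrite !inE.
by case: (boolP (x \in A)) => [/(subsetP AB) ->|].
Qed.

Lemma setUKD A B : [disjoint B & A] -> (A :|: B) :\: A = B.
Proof. by move=> dBA; rewrite setDUl setDv set0U; apply/setDidPl. Qed.

Lemma disjoint_setD A B : [disjoint A :\: B & B].
Proof. by rewrite -setI_eq0 setIDAC setD_eq0 subsetIr. Qed.

Lemma gen_setP A L : reflect (exists2 F, F \in L & A \subset F) (A \in gen_set L).
Proof. by rewrite inE; apply: (iffP exists_inP) => -[F]; exists F. Qed.

Lemma mem_gen_set A L : A \in L -> A \in gen_set L.
Proof. by move=> AL; apply/gen_setP; exists A. Qed.

Lemma gen_set0 : gen_set set0 = set0 :> {set {set T}}.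
Proof. by apply/setP=> A; rewrite [RHS]inE; apply/gen_setP => -[F]; rewrite inE. Qed.

Lemma facetsP D F :
  reflect (F \in D /\ forall G, G \in D -> F \subset G -> G = F) (F \in facets D).
Proof.
rewrite inE; apply: (iffP andP) => -[FD Fmax]; split=> //.
  by move=> G GD FG; apply/eqP; exact: (implyP (forall_inP Fmax G GD)).
by apply/forall_inP=> G GD; apply/implyP=> FG; rewrite (Fmax G GD FG).
Qed.

Lemma facets_gen_set L F : F \in facets (gen_set L) -> F \in L.
Proof.
case/facetsP=> /gen_setP [G GL FG] Fmax.
by rewrite -(Fmax G) // mem_gen_set.
Qed.

Lemma face_sub_facet D A : A \in D -> exists2 F, F \in facets D & A \subset F.
Proof.
move=> AD; have [F /maxsetP [FD Fmax] AF] := maxset_exists (P := mem D) AD.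
by exists F => //; apply/facetsP; split=> // G GD FG; exact: Fmax.
Qed.

Definition overlap F p := gen_seq [:: F] :&: gen_seq p.

Lemma in_overlap A F p :
  (A \in overlap F p) = (A \subset F) && has (fun G => A \subset G) p.
Proof. by rewrite !inE /= orbF. Qed.

Lemma overlap_nil F : overlap F [::] = set0.
Proof. by apply/setP=> A; rewrite in_overlap andbF inE. Qed.

Lemma set0_overlap F p : p != [::] -> set0 \in overlap F p.
Proof. by case: p => // G p _; rewrite in_overlap /= !sub0set. Qed.

Definition codim_generated k F D :=
  exists2 L : {set {set T}},
    forall A, A \in L -> A \subset F /\ #|A| + k = #|F| & D = gen_set L.

Definition facets_pairwise_span F D :=
  1 < #|facets D| -> forall sg tau, sg \in facets D -> tau \in facets D ->
    sg != tau -> F \subset sg :|: tau.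

Definition shell_cond k F D := codim_generated k F D /\ facets_pairwise_span F D.

(* Unlike in [kshellable], the condition is also imposed on the first facet,
   where the overlap is empty and it holds vacuously; at the other positions
   the overlap contains [set0], so a generating family is never empty. *)
Definition shelling k s :=
  forall p F q, s = p ++ F :: q -> shell_cond k F (overlap F p).

Lemma shell_cond0 k F : shell_cond k F set0.
Proof.
split; first by exists set0 => [A|]; rewrite ?inE ?gen_set0.
rewrite /facets_pairwise_span (_ : facets set0 = set0) ?cards0 //.
by apply/setP=> A; rewrite !inE.
Qed.

Lemma kshellableE k D :
  kshellable k D <->
  0 < k /\ exists s, [/\ uniq s, [set F in s] = facets D & shelling k s].
Proof.
split=> -[k_gt0 [s [s_uniq sD s_sh]]]; split=> //; exists s; split=> //.
  move=> p F q sE; have [->|p_neq0] := eqVneq p [::].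
    by rewrite overlap_nil; exact: shell_cond0.
  have j_lt : 0 < size p < size s.
    by rewrite sE size_cat /= lt0n size_eq0 p_neq0 -addSnnS leq_addr.
  have sF : nth set0 s (size p) = F by rewrite sE nth_cat ltnn subnn.
  have sp : take (size p) s = p by rewrite sE take_size_cat.
  by have /= := s_sh _ j_lt; rewrite sF sp => -[[L [_ LP GE]] span]; split=> //; exists L.
move=> j /andP [j_gt0 j_lt]; set F := nth set0 s j.
have sE : s = take j s ++ F :: drop j.+1 s by rewrite -drop_nth // cat_take_drop.
have [[L LP GE] span] := s_sh _ _ _ sE; split=> //; exists L; split=> //.
apply: contraTneq (set0_overlap F (p := take j s) _) => [L0|].
  by rewrite GE L0 gen_set0 inE.
by rewrite -size_eq0 size_take j_lt -lt0n.
Qed.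

Lemma shelling_nil k : shelling k [::].
Proof. by move=> [|? ?] ? ?. Qed.

Lemma shelling_rcons k s F :
  shelling k (rcons s F) <-> shelling k s /\ shell_cond k F (overlap F s).
Proof.
split=> [sh | [sh shF] p G q].
  split=> [p G q sE|]; last by apply: (sh s F [::]); rewrite cats1.
  by apply: (sh p G (rcons q F)); rewrite sE rcons_cat.
case/lastP: q => [|q x]; first by rewrite cats1 => /rcons_inj [<- <-].
by rewrite -rcons_cons -rcons_cat => /rcons_inj [sE _]; exact: sh sE.
Qed.

End Complexes.

Section Link.
Variable T : finType.
Implicit Types (A B C F G H Si : {set T}) (s p : seq {set T}) (L D : {set {set T}}).

Definition link Si D := [set B : {set T} | [disjoint B & Si] && (Si :|: B \in D)].

Lemma link_facet_disjoint Si D H : H \in facets (link Si D) -> [disjoint H & Si].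
Proof. by case/facetsP; rewrite inE => /andP []. Qed.

Lemma link_facet_setU Si D H : H \in facets (link Si D) -> Si :|: H \in facets D.
Proof.
case/facetsP; rewrite inE => /andP [dHS SH_D] Hmax; apply/facetsP; split=> // C CD SHC.
have SiC : Si \subset C := subset_trans (subsetUl Si H) SHC.
have C_link : C :\: Si \in link Si D by rewrite inE disjoint_setD setUDK.
have HC : H \subset C :\: Si by rewrite subsetD dHS (subset_trans (subsetUr Si H)).
by rewrite -(Hmax _ C_link HC) setUDK.
Qed.

Lemma facet_setD_link Si D F :
  F \in facets D -> Si \subset F -> F :\: Si \in facets (link Si D).
Proof.
case/facetsP=> FD Fmax SiF; apply/facetsP; split=> [|C].
  by rewrite inE disjoint_setD setUDK.
rewrite inE => /andP [dCS SC_D] FSC.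
have FC : F \subset Si :|: C by rewrite -(setUDK SiF) setUS.
by rewrite -(Fmax _ SC_D FC) setUKD.
Qed.

Lemma shell_cond_link k Si F D :
  Si \subset F -> shell_cond k F D -> shell_cond k (F :\: Si) (link Si D).
Proof.
move=> SiF [[L LP ->] span]; split.
  exists [set A :\: Si | A in [set A in L | Si \subset A]].
    move=> X /imsetP [A]; rewrite inE => /andP [AL SiA] ->.
    have [AF cardA] := LP A AL; split; first exact: setSD.
    by rewrite !cardsDS ?(subset_trans SiA AF) //; have := subset_leq_card SiA; lia.
  apply/setP=> B; rewrite inE.
  apply/andP/gen_setP => [[dBS /gen_setP [A AL]] | [X /imsetP [A]]].
    rewrite subUset => /andP [SiA BA]; exists (A :\: Si); last by rewrite subsetD BA.
    by apply/imsetP; exists A; rewrite ?inE ?AL.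
  rewrite inE => /andP [AL SiA] ->; rewrite subsetD => /andP [BA dBS]; split=> //.
  by apply/gen_setP; exists A; rewrite // subUset SiA.
move=> _ sg tau sgF tauF sg_tau.
have neq : Si :|: sg != Si :|: tau.
  apply: contra sg_tau => /eqP E.
  by rewrite -(setUKD (link_facet_disjoint sgF)) E setUKD // (link_facet_disjoint tauF).
have gt1 : 1 < #|facets (gen_set L)|.
  by apply/card_gt1P; exists (Si :|: sg), (Si :|: tau); rewrite !link_facet_setU.
have := span gt1 _ _ (link_facet_setU sgF) (link_facet_setU tauF) neq.
by rewrite -setUUr subDset.
Qed.

Lemma overlap_link Si F p : Si \subset F ->
  overlap (F :\: Si) [seq G :\: Si | G <- p & Si \subset G] = link Si (overlap F p).
Proof.
move=> SiF; apply/setP=> B; rewrite [RHS]inE !in_overlap subsetD subUset SiF /=.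
case: (boolP [disjoint B & Si]) => dBS; rewrite ?andbF //= has_map andbT.
rewrite -size_filter_gt0 -filter_predI size_filter_gt0; congr (_ && _).
by apply: eq_has => G /=; rewrite subsetD dBS subUset andbT andbC.
Qed.

Lemma shelling_link k Si s :
  shelling k s -> shelling k [seq G :\: Si | G <- s & Si \subset G].
Proof.
elim/last_ind: s => [|s F IH]; first by move=> _; exact: shelling_nil.
case/shelling_rcons=> s_sh F_sh; rewrite filter_rcons; case: ifP => SiF; last exact: IH.
rewrite map_rcons; apply/shelling_rcons; split; first exact: IH.
by rewrite overlap_link //; exact: shell_cond_link.
Qed.

Lemma kshellable_link k Si D : kshellable k D -> kshellable k (link Si D).
Proof.
rewrite !kshellableE => -[k_gt0 [s [s_uniq sD s_sh]]]; split=> //.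
exists [seq G :\: Si | G <- s & Si \subset G]; split; last exact: shelling_link.
  rewrite map_inj_in_uniq ?filter_uniq // => G1 G2.
  by rewrite !mem_filter => /andP [SiG1 _] /andP [SiG2 _] E; rewrite -(setUDK SiG1) E setUDK.
apply/setP=> H; rewrite inE; apply/mapP/idP => [[G] | Hf].
  rewrite mem_filter => /andP [SiG Gs] ->.
  by apply: facet_setD_link SiG; rewrite -sD inE.
exists (Si :|: H); last by rewrite setUKD // (link_facet_disjoint Hf).
by rewrite mem_filter subsetUl -[_ \in s]in_set sD link_facet_setU.
Qed.

Lemma mem_setU_link_facets Si D s F : [set H in s] = facets (link Si D) ->
  (F \in [seq Si :|: H | H <- s]) = (F \in facets D) && (Si \subset F).
Proof.
move=> sD; apply/mapP/andP => [[H Hs ->] | [Ff SiF]].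
  by rewrite subsetUl link_facet_setU // -sD inE.
exists (F :\: Si); last by rewrite setUDK.
by rewrite -[_ \in s]in_set sD facet_setD_link.
Qed.

Lemma uniq_setU_link Si D s : [set H in s] = facets (link Si D) -> uniq s ->
  uniq [seq Si :|: H | H <- s].
Proof.
move=> sD; rewrite map_inj_in_uniq // => H1 H2 H1s H2s E.
have dS H : H \in s -> [disjoint H & Si].
  by move=> Hs; apply: (@link_facet_disjoint _ D); rewrite -sD inE.
by rewrite -(setUKD (dS _ H1s)) E setUKD // dS.
Qed.

End Link.

Section Join.
Variable T : finType.
Implicit Types (A B C F G H Sj : {set T}) (a q : seq {set T}) (L D : {set {set T}}).

Definition join_simplex Sj D := [set C : {set T} | C :\: Sj \in D].

Lemma overlap_join Sj H a q :
  [disjoint Sj & H] -> {in a, forall G, [disjoint Sj & G]} ->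
  (a != [::] -> has (fun G => H \subset G) a) ->
  overlap (Sj :|: H) (a ++ [seq Sj :|: G | G <- q]) =
    [set C : {set T} | (a != [::]) && (C \subset H)] :|: join_simplex Sj (overlap H q).
Proof.
move=> dSH dSa Ha; apply/setP=> C.
rewrite in_overlap in_setU [C \in join_simplex _ _]inE in_overlap inE.
rewrite has_cat has_map andb_orr subDset; congr (_ || _); last first.
  by congr (_ && _); apply: eq_has => G /=; rewrite subDset.
apply/andP/andP => [[CSH /hasP [G Ga CG]] | [a_neq0 CH]].
  split; first by case: (a) Ga.
  have dCS : [disjoint C & Sj] by rewrite disjoint_sym (disjointWr CG (dSa G Ga)).
  by rewrite -(setUKD (_ : [disjoint H & Sj])) 1?disjoint_sym // subsetD CSH.
split; first exact: subset_trans CH (subsetUr Sj H).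
by have /hasP [G Ga HG] := Ha a_neq0; apply/hasP; exists G; rewrite // (subset_trans CH).
Qed.

Lemma facet_join_simplex Sj A D D0 : {in D, forall B, [disjoint B & Sj]} ->
  A \in D -> Sj :|: A \in facets (D0 :|: join_simplex Sj D) -> A \in facets D.
Proof.
move=> dD AD /facetsP [_ Amax]; apply/facetsP; split=> // B BD AB.
have SB : Sj :|: B \in D0 :|: join_simplex Sj D by rewrite in_setU inE setUKD ?BD ?orbT ?dD.
by rewrite -(setUKD (dD _ BD)) (Amax _ SB (setUS Sj AB)) setUKD ?dD.
Qed.

Lemma gen_set_join_simplex (b : bool) Sj H L :
  [set C : {set T} | b && (C \subset H)] :|: join_simplex Sj (gen_set L) =
    gen_set ([set X : {set T} | b && (X == H)] :|: [set Sj :|: A | A in L]).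
Proof.
apply/setP=> C; rewrite in_setU [C \in join_simplex _ _]inE inE.
apply/idP/gen_setP => [/orP [/andP [bT CH] | /gen_setP [A AL CA]] | [X]].
- by exists H; rewrite // in_setU inE bT eqxx.
- by exists (Sj :|: A); rewrite -?subDset // in_setU imset_f ?orbT.
rewrite in_setU inE => /orP [/andP [bT /eqP ->] CH | /imsetP [A AL ->] CA].
  by rewrite bT CH.
by apply/orP; right; apply/gen_setP; exists A; rewrite // subDset.
Qed.

Lemma shell_cond_join k (b : bool) Sj H D :
  [disjoint Sj & H] -> #|Sj| = k -> shell_cond k H D ->
  shell_cond k (Sj :|: H) ([set C : {set T} | b && (C \subset H)] :|: join_simplex Sj D).
Proof.
move=> dSH cardS [[L LP ->] span]; have genE := gen_set_join_simplex b Sj H L.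
have cardU A : A \subset H -> #|Sj :|: A| = k + #|A|.
  by move=> AH; rewrite cardsU disjoint_setI0 ?cards0 ?subn0 ?cardS // (disjointWr AH dSH).
split.
  exists ([set X : {set T} | b && (X == H)] :|: [set Sj :|: A | A in L]); last exact: genE.
  move=> X; rewrite in_setU inE => /orP [/andP [_ /eqP ->] | /imsetP [A AL ->]].
    by rewrite subsetUr cardU // addnC.
  by have [AH cardA] := LP A AL; rewrite setUS // !cardU // -cardA addnA.
move=> gt1 sg tau sgF tauF sg_tau.
have dL : {in gen_set L, forall B, [disjoint B & Sj]}.
  move=> B /gen_setP [A /LP [AH _] BA].
  by rewrite disjoint_sym (disjointWr (subset_trans BA AH) dSH).
move: (sgF) (tauF); rewrite genE => /facets_gen_set + /facets_gen_set.
rewrite !in_setU !inE.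
case/orP=> [/andP [_ /eqP sgH] | /imsetP [A AL sgA]];
  case/orP=> [/andP [_ /eqP tauH] | /imsetP [A' AL' tauA]].
- by rewrite sgH tauH eqxx in sg_tau.
- by rewrite sgH tauA setUCA setUS ?subsetUl.
- by rewrite tauH sgA setUAC subsetUl.
rewrite sgA in sgF; rewrite tauA in tauF.
have Af := facet_join_simplex dL (mem_gen_set AL) sgF.
have A'f := facet_join_simplex dL (mem_gen_set AL') tauF.
have AA' : A != A' by apply: contra sg_tau => /eqP AA'; rewrite sgA tauA AA'.
have gt1' : 1 < #|facets (gen_set L)| by apply/card_gt1P; exists A, A'.
by rewrite sgA tauA -setUUr setUS // span.
Qed.

Lemma shelling_cat_join k Sj a q : #|Sj| = k -> shelling k a -> shelling k q ->
  {in a, forall G, [disjoint Sj & G]} -> {in q, forall H, [disjoint Sj & H]} ->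
  (a != [::] -> {in q, forall H, has (fun G => H \subset G) a}) ->
  shelling k (a ++ [seq Sj :|: H | H <- q]).
Proof.
move=> cardS a_sh + dSa; elim/last_ind: q => [|q H IH]; first by rewrite cats0.
case/shelling_rcons=> q_sh H_sh dSq Ha.
have Hq : H \in rcons q H by rewrite mem_rcons inE eqxx.
have qq G : G \in q -> G \in rcons q H by move=> Gq; rewrite mem_rcons inE Gq orbT.
rewrite map_rcons -rcons_cat; apply/shelling_rcons; split.
  by apply: IH => // [G /qq | a_neq0 G /qq]; [exact: dSq | exact: Ha].
rewrite overlap_join ?dSq //; first exact: shell_cond_join (dSq _ Hq) cardS H_sh.
by move=> a_neq0; exact: Ha.
Qed.

End Join.

Section Graph.
Variables (T : finType) (e : rel T).
Hypothesis e_sym : symmetric e.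
Implicit Types (B C F G H : {set T}) (l s : seq {set T}) (x y z : T).

Lemma indepP F : reflect {in F &, forall x y, ~~ e x y} (indep e F).
Proof.
apply: (iffP forall_inP) => iF => [x y xF yF | x xF].
  exact: (forall_inP (iF x xF) y yF).
by apply/forall_inP=> y yF; exact: iF.
Qed.

Lemma indep_subset C F : C \subset F -> indep e F -> indep e C.
Proof. by move=> CF /indepP iF; apply/indepP=> x y /(subsetP CF) xF /(subsetP CF); exact: iF. Qed.

Lemma sub_closedN B : B \subset closedN e B.
Proof. by apply/subsetP=> x xB; rewrite inE; apply/exists_inP; exists x; rewrite ?eqxx. Qed.

Lemma closedN_nbr B x y : x \in B -> e x y -> y \in closedN e B.
Proof. by move=> xB exy; rewrite inE; apply/exists_inP; exists x; rewrite ?exy ?orbT. Qed.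

Lemma link_indcomplex B :
  indep e B -> link B (indcomplex e [set: T]) = indcomplex e (~: closedN e B).
Proof.
move=> /indepP iB; apply/setP=> H; rewrite !inE subsetT /=.
apply/andP/andP => [[dHB /indepP iBH] | [HN /indepP iH]]; split.
- apply/subsetP=> y yH; rewrite inE; apply/negP; rewrite inE.
  case/exists_inP=> x xB /orP [/eqP xy | exy]; first by rewrite xy (disjointFr dHB yH) in xB.
  by have := iBH x y; rewrite !inE xB yH orbT exy => /(_ isT isT).
- by apply/indepP=> x y xH yH; apply: iBH; rewrite inE ?xH ?yH orbT.
- by rewrite disjoints_subset (subset_trans HN) // setCS sub_closedN.
apply/indepP=> x y; rewrite !inE => /orP [xB | xH] /orP [yB | yH].
- exact: iB.
- by apply: contraTN (subsetP HN y yH) => /(closedN_nbr xB) yN; rewrite inE yN.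
- by apply: contraTN (subsetP HN x xH); rewrite e_sym => /(closedN_nbr yB) xN; rewrite inE xN.
- exact: iH.
Qed.

Hypothesis e_irr : irreflexive e.
Variables (k : nat) (S1 : {set T}) (P : {set {set T}}).
Hypothesis hP : ksimplicial_parts e k S1 P.

Local Notation Delta := (indcomplex e [set: T]).

Lemma cover_parts : cover P = closedN e S1.
Proof. by case: hP => _ /and3P [/eqP]. Qed.

Lemma part_card B : B \in P -> #|B| = k.
Proof. by case: hP => _ _ cardP _ _; exact: cardP. Qed.

Lemma part_neq0 B : B \in P -> exists x, x \in B.
Proof.
move=> BP; case: hP => _ /and3P [_ _ P0] _ _ _.
by apply/set0Pn; apply: contraNneq P0 => <-.
Qed.

Lemma part_sub B : B \in P -> B \subset closedN e S1.
Proof. by move=> BP; rewrite -cover_parts; exact: bigcup_sup. Qed.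

Lemma pblock_part B x : B \in P -> x \in B -> pblock P x = B.
Proof. by case: hP => _ /and3P [_ triv _] _ _ _; exact: def_pblock. Qed.

Lemma indep_parts_eq F B C x y : indep e F -> B \in P -> C \in P ->
  x \in B -> y \in C -> x \in F -> y \in F -> B = C.
Proof.
move=> /indepP iF BP CP xB yC xF yF; case: hP => _ _ _ multipartite _.
move: (iF x y xF yF).
rewrite multipartite ?(subsetP (part_sub BP) x xB) ?(subsetP (part_sub CP) y yC) //.
by rewrite (pblock_part BP xB) (pblock_part CP yC) negbK => /eqP.
Qed.

Lemma part_indep B : B \in P -> indep e B.
Proof.
move=> BP; apply/indepP=> x y xB yB; case: hP => _ _ _ multipartite _.
rewrite multipartite ?(subsetP (part_sub BP) x xB) ?(subsetP (part_sub BP) y yB) //.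
by rewrite (pblock_part BP xB) (pblock_part BP yB) eqxx.
Qed.

Lemma part_nbr B x y z : B \in P -> x \in B -> y \in B -> e x z = e y z.
Proof.
case: hP => _ _ _ _ sameN BP xB yB.
by have /setP /(_ z) := sameN B x y BP xB yB; rewrite !inE.
Qed.

Lemma facet_part F B x :
  F \in facets Delta -> B \in P -> x \in B -> x \in F -> B \subset F.
Proof.
case/facetsP=> FD Fmax BP xB xF; move: (FD); rewrite inE => /andP [_ /indepP iF].
apply/subsetP=> y yB.
have yF_D : y |: F \in Delta.
  rewrite inE subsetT; apply/indepP=> u v; rewrite !inE.
  move=> /orP [/eqP -> | uF] /orP [/eqP -> | vF]; rewrite ?e_irr //.
  - by rewrite -(part_nbr _ BP xB yB); exact: iF.
  - by rewrite e_sym -(part_nbr _ BP xB yB); exact: iF.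
  - exact: iF.
by rewrite -(Fmax _ yF_D (subsetUr _ _)) setU11.
Qed.

Hypothesis S1P : S1 \in P.

Lemma facet_has_part F : F \in facets Delta -> exists2 B, B \in P & B \subset F.
Proof.
move=> Ff; case: (boolP [exists z in F, z \in closedN e S1]).
  case/exists_inP=> z zF; rewrite -cover_parts => zN.
  exists (pblock P z); first exact: pblock_mem.
  by apply: facet_part Ff (pblock_mem zN) _ zF; rewrite mem_pblock.
move/exists_inPn => FN; exists S1 => //.
case/facetsP: Ff => FD Fmax.
have F_link : F \in link S1 Delta.
  rewrite link_indcomplex ?part_indep // inE; move: FD; rewrite inE subsetT /= => ->.
  by rewrite andbT; apply/subsetP=> z zF; rewrite inE FN.
by move: F_link; rewrite inE => /andP [_ /Fmax]; rewrite subsetUr => /(_ isT) <-; rewrite subsetUl.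
Qed.

Lemma indep_part_disjoint F B C : indep e F -> B \in P -> C \in P ->
  B \subset F -> B != C -> [disjoint C & F].
Proof.
move=> iF BP CP BF; apply: contraNT => /pred0Pn [y /andP [yC yF]].
have [x xB] := part_neq0 BP.
by rewrite (indep_parts_eq iF BP CP xB yC (subsetP BF x xB) yF) eqxx.
Qed.

Lemma link_part_S1 B H : B \in P -> H \in link B Delta -> S1 :|: H \in Delta.
Proof.
move=> BP; rewrite [H \in _]inE => /andP [dHB]; rewrite inE subsetT => iBH.
suff : H \in link S1 Delta by rewrite inE => /andP [].
rewrite link_indcomplex ?part_indep // inE (indep_subset (subsetUr B H) iBH) andbT.
apply/subsetP=> z zH; rewrite inE; apply/negP; rewrite -cover_parts => zN.
have [x xB] := part_neq0 BP.
have zz : z \in pblock P z by rewrite mem_pblock.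
have := indep_parts_eq iBH BP (pblock_mem zN) xB zz; rewrite !inE xB zH orbT => /(_ isT isT) Bz.
by move: (disjointFr dHB zH); rewrite Bz zz.
Qed.

Definition part_shelling l s := [/\ uniq s, shelling k s &
  forall F, (F \in s) = (F \in facets Delta) && has (fun B => B \subset F) l].

Lemma part_shelling_rcons l s Sj : {subset l <= P} -> (l != [::] -> S1 \in l) ->
  Sj \in P -> Sj \notin l -> part_shelling l s ->
  kshellable_graph k e (~: closedN e Sj) -> exists s', part_shelling (rcons l Sj) s'.
Proof.
move=> lP lS1 SjP Sj_l [s_uniq s_sh mem_s].
rewrite /kshellable_graph -link_indcomplex ?part_indep // kshellableE.
case=> _ [sj [sj_uniq sjD sj_sh]].
have sj_link H : H \in sj -> H \in facets (link Sj Delta) by rewrite -sjD inE.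
have dSsj : {in sj, forall H, [disjoint Sj & H]}.
  by move=> H /sj_link /link_facet_disjoint; rewrite disjoint_sym.
have dSs : {in s, forall G, [disjoint Sj & G]}.
  move=> G; rewrite mem_s => /andP [/facetsP [GD _] /hasP [B Bl BG]].
  move: GD; rewrite inE => /andP [_ iG]; apply: indep_part_disjoint iG (lP B Bl) SjP BG _.
  by apply: contraNneq Sj_l => <-.
exists (s ++ [seq Sj :|: H | H <- sj]); split.
- rewrite cat_uniq s_uniq (uniq_setU_link sjD sj_uniq) andbT /=.
  apply/hasPn=> _ /mapP [H _ ->]; apply/negP => /dSs.
  have [x xSj] := part_neq0 SjP.
  by move/disjointFr/(_ xSj); rewrite inE xSj.
- apply: shelling_cat_join => //; first exact: part_card.
  move=> s_neq0 H /sj_link /facetsP [H_link _].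
  have [F Ff SHF] := face_sub_facet (link_part_S1 SjP H_link).
  have [G Gs] : exists G, G \in s by case: (s) s_neq0 => // G ? _; exists G; rewrite inE eqxx.
  have l_neq0 : l != [::] by move: Gs; rewrite mem_s => /andP [_]; case: (l).
  apply/hasP; exists F; last by rewrite (subset_trans (subsetUr _ _) SHF).
  by rewrite mem_s Ff; apply/hasP; exists S1; rewrite ?lS1 // (subset_trans (subsetUl _ _) SHF).
- by move=> F; rewrite mem_cat mem_s (mem_setU_link_facets _ sjD) has_rcons -andb_orr orbC.
Qed.

Lemma part_shelling_exists l : uniq (S1 :: l) -> {subset l <= P} ->
  (forall B, B \in P -> kshellable_graph k e (~: closedN e B)) ->
  exists s, part_shelling (S1 :: l) s.
Proof.
move=> + + shB; elim/last_ind: l => [_ _ | l Sj IH].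
  apply: (@part_shelling_rcons [::] [::]) => //; last exact: shB.
  by split=> [||F]; rewrite ?in_nil /= ?andbF //; exact: shelling_nil.
rewrite -rcons_cons rcons_uniq => /andP [Sj_l l_uniq] lP.
have lP' : {subset l <= P} by move=> B Bl; apply: lP; rewrite mem_rcons inE Bl orbT.
have SjP : Sj \in P by apply: lP; rewrite mem_rcons inE eqxx.
have [s hs] := IH l_uniq lP'.
apply: part_shelling_rcons hs (shB _ SjP) => //.
- by move=> B; rewrite inE => /predU1P [-> //|]; exact: lP'.
- by rewrite inE eqxx.
Qed.

Lemma kshellable_of_parts :
  (forall B, B \in P -> kshellable_graph k e (~: closedN e B)) ->
  kshellable_graph k e [set: T].
Proof.
move=> shB; have [k_gt0 _] := (kshellableE _ _).1 (shB S1 S1P).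
have [|B|s [s_uniq s_sh mem_s]] := @part_shelling_exists (enum (P :\ S1)) _ _ shB.
- by rewrite /= enum_uniq mem_enum !inE eqxx.
- by rewrite mem_enum inE => /andP [].
rewrite /kshellable_graph kshellableE; split=> //; exists s; split=> //.
apply/setP=> F; rewrite inE mem_s; apply/andb_idr => /facet_has_part [B BP BF].
by apply/hasP; exists B; rewrite // inE mem_enum in_setD1 BP andbT orbN.
Qed.

End Graph.

Theorem theorem4p7 (T : finType) (e : rel T) (e_sym : symmetric e)
    (e_irr : irreflexive e) (k : nat) (S1 : {set T}) (P : {set {set T}}) :
  ksimplicial_parts e k S1 P -> S1 \in P ->
  kshellable_graph k e [set: T] <->
  (forall Si, Si \in P -> kshellable_graph k e (~: closedN e Si)).
Proof.
move=> hP S1P; split=> [sh Si SiP | shB].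
  by rewrite /kshellable_graph -link_indcomplex ?(part_indep hP) //; exact: kshellable_link.
exact: (kshellable_of_parts e_sym e_irr hP S1P shB).
Qed.
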